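(* Let $X$ be a real Banach space, let $\{T_n:X\rightrightarrows X^*\}_{n\in\mathbb{N}}$ be a sequence of maximal monotone operators of type (D), and let $(\varepsilon_n)_n$ be any sequence of positive numbers converging to zero. Let $T=\liminf T_n$. Then for $(x,x^* )\in X\times X^*$, $(x,x^* )\in T$ if and only if $x=\lim_n x_n$ (in norm), where for each $n$, $x_n\in X$ is a solution of $x^*\in T_n(x_n)+J_{\varepsilon_n}(x_n-x)$.
   Context: Operators are identified with their graphs; $\langle\cdot,\cdot\rangle$ is the duality pairing and $X\subset X^{**}$ canonically. $T:X\rightrightarrows X^*$ is monotone if $\langle x-y,x^*-y^*\rangle\ge0$ for all $(x,x^* ),(y,y^* )\in T$; maximal monotone if not properly contained in another monotone operator. For maximal monotone $T$, $\widetilde T=\{(x^{**},x^* )\in X^{**}\times X^*: \langle x^{**}-y,x^*-y^*\rangle\ge 0\ \forall (y,y^* )\in T\}$; $T$ is of type (D) if each $(x^{**},x^* )\in\widetilde T$ is the weak$^*\times$norm limit of a bounded net in $T$. $J_\varepsilon=\partial_\varepsilon(\tfrac12\|\cdot\|^2)$: $w^*\in J_\varepsilon(y)$ iff $\tfrac12\|y\|^2+\tfrac12\|w^*\|^2\le\langle y,w^*\rangle+\varepsilon$. (For type (D) operators such solutions $x_n$ always exist.) The sequential lower limit is $\liminf T_n=\{(x,x^* ): \exists (y_n,y_n^* )\in T_n,\ (y_n,y_n^* )\to(x,x^* ) \text{ in the norm}\times\text{norm topology}\}$. The equivalence is understood for any choice of solutions $x_n$. *)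

(* The dual Xs is represented by the functions [X -> R]
   satisfying [is_dual] (continuous linear functionals); the bidual Xss by the
   functions [(X -> R) -> R] satisfying [is_bidual] (linear and bounded on Xs).
   Operators X ⇉ Xs are identified with their graphs: relations [X -> (X -> R) -> Prop]. *)
From HB Require Import structures.
From mathcomp Require Import all_boot all_order all_algebra.
From mathcomp Require Import all_classical all_reals all_analysis.
Set Implicit Arguments. Unset Strict Implicit. Unset Printing Implicit Defensive.
Import Order.TTheory GRing.Theory Num.Theory.
Import numFieldNormedType.Exports.
Local Open Scope classical_set_scope.
Local Open Scope ring_scope.

Section Banach.
Variables (R : realType) (X : completeNormedModType R).

Definition is_dual (f : X -> R) : Prop :=
  (forall (a : R) (x y : X), f (a *: x + y) = a * f x + f y) /\ continuous f.

Definition dnorm (f : X -> R) : R :=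
  sup [set `|f x| | x in [set x : X | `|x| <= 1]].

Definition is_bidual (phi : (X -> R) -> R) : Prop :=
  (forall (a : R) (f g : X -> R), is_dual f -> is_dual g ->
      phi (fun x => a * f x + g x) = a * phi f + phi g) /\
  (exists C : R, forall f, is_dual f -> `|phi f| <= C * dnorm f).

Definition operator := X -> (X -> R) -> Prop.

Definition is_op (T : operator) : Prop := forall x f, T x f -> is_dual f.

Definition monotone (T : operator) : Prop :=
  is_op T /\
  forall x f y g, T x f -> T y g -> 0 <= f (x - y) - g (x - y).

Definition maximal_monotone (T : operator) : Prop :=
  monotone T /\
  forall S : operator, monotone S -> (forall x f, T x f -> S x f) ->
    forall x f, S x f -> T x f.

Definition tilde (T : operator) (phi : (X -> R) -> R) (f : X -> R) : Prop :=
  is_bidual phi /\ is_dual f /\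
  forall y g, T y g ->
    0 <= phi (fun z => f z - g z) - (f y - g y).

Definition directed (I : Type) (le : I -> I -> Prop) : Prop :=
  (exists i : I, True) /\ (forall i, le i i) /\
  (forall i j k, le i j -> le j k -> le i k) /\
  (forall i j, exists k, le i k /\ le j k).

Definition net_cvg (I : Type) (le : I -> I -> Prop) (u : I -> R) (l : R) : Prop :=
  forall e : R, 0 < e -> exists i0, forall i, le i0 i -> `|u i - l| < e.

(* type (D): every element of tilde T is the weak-star × norm limit of a bounded
   net in T (X embedded in Xss canonically: x ↦ (f ↦ f x)) *)
Definition type_D (T : operator) : Prop :=
  forall phi f, tilde T phi f ->
  exists (I : Type) (le : I -> I -> Prop) (xs : I -> X) (fs : I -> X -> R),
    [/\ directed le,
        (forall i, T (xs i) (fs i)),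
        (exists M : R, forall i, `|xs i| <= M /\ dnorm (fs i) <= M),
        (forall g, is_dual g -> net_cvg le (fun i => g (xs i)) (phi g)) &
        net_cvg le (fun i => dnorm (fun z => fs i z - f z)) 0].

Definition J_eps (eps : R) (y : X) (w : X -> R) : Prop :=
  is_dual w /\ `|y| ^+ 2 / 2 + dnorm w ^+ 2 / 2 <= w y + eps.

Definition liminf_op (Ts : nat -> operator) : operator :=
  fun x f => exists (ys : nat -> X) (gs : nat -> X -> R),
    [/\ (forall n, Ts n (ys n) (gs n)),
        ys @ \oo --> x &
        (fun n => dnorm (fun z => gs n z - f z)) @ \oo --> (0 : R)].

End Banach.

From HB Require Import structures.
From mathcomp Require Import all_boot all_order all_algebra.
From mathcomp Require Import all_classical all_reals all_analysis.
From mathcomp Require Import ring lra.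
Import Order.TTheory GRing.Theory Num.Theory.
Import numFieldNormedType.Exports.
Local Open Scope classical_set_scope.
Local Open Scope ring_scope.

(* Write f = g_n + w_n with g_n in T_n(x_n) and w_n in J_eps_n(x_n - x).
   The defining inequality of J_eps gives ||w_n||^2 <= 4 (||x_n - x||^2 + eps_n),
   so if x_n -> x then (x_n, g_n) in T_n converges to (x, f).  Conversely, if
   (y_n, h_n) in T_n converges to (x, f), monotonicity of T_n applied to
   (x_n, g_n) and (y_n, h_n) bounds w_n(x_n - y_n), and the J_eps inequality
   then gives ||x_n - x||^2 <= 4 ((||h_n - f|| + ||y_n - x||)^2 + eps_n). *)

Section DualSpace.
Context {R : realType} {X : completeNormedModType R}.
Implicit Types (h w : X -> R) (x y : X).

Lemma dual0 h : is_dual h -> h 0 = 0.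
Proof. by case=> lin _; have := lin 1 0 0; rewrite scaler0 addr0 mul1r; lra. Qed.

Lemma dualZ h a x : is_dual h -> h (a *: x) = a * h x.
Proof. by move=> hd; have := hd.1 a x 0; rewrite !addr0 dual0 // addr0. Qed.

Lemma dualD h x y : is_dual h -> h (x + y) = h x + h y.
Proof. by move=> hd; have := hd.1 1 x y; rewrite scale1r mul1r. Qed.

Lemma is_dualB {h w} : is_dual h -> is_dual w -> is_dual (fun z => h z - w z).
Proof.
move=> hd wd; split=> [a x y|x]; first by rewrite hd.1 wd.1; ring.
exact: continuousB (hd.2 x) (wd.2 x).
Qed.

Lemma has_ubound_dual_ball {h} : is_dual h ->
  has_ubound [set `|h x| | x in [set x : X | `|x| <= 1]].
Proof.
move=> hd; have := hd.2 0 => /cvgrPdist_lt /(_ 1 ltr01); rewrite dual0 //.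
case/nbhs_norm0P=> r /= r0 hr; have r2 : 0 < r / 2 by rewrite divr_gt0.
exists (2 / r) => _ [x /= x1 <-].
have : `|(r / 2) *: x| < r.
  rewrite normrZ (gtr0_norm r2).
  have : r / 2 * `|x| <= r / 2 by rewrite ler_piMr // ltW.
  lra.
move/hr; rewrite sub0r normrN dualZ // normrM (gtr0_norm r2) => hx.
by rewrite ler_pdivlMr //; lra.
Qed.

Lemma dnorm_ge0 {h} : is_dual h -> 0 <= dnorm h.
Proof.
move=> hd; have /(_ 0) := ub_le_sup (has_ubound_dual_ball hd); apply.
exists 0; first by rewrite /= normr0.
by rewrite dual0 // normr0.
Qed.

Lemma dual_le_dnorm {h} x : is_dual h -> `|h x| <= dnorm h * `|x|.
Proof.
move=> hd; have [->|x0] := eqVneq x 0; first by rewrite dual0 // !normr0 mulr0.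
have nx : 0 < `|x| by rewrite normr_gt0.
have : `|h (`|x|^-1 *: x)| <= dnorm h.
  have /(_ (`|h (`|x|^-1 *: x)|)) := ub_le_sup (has_ubound_dual_ball hd); apply.
  exists (`|x|^-1 *: x) => //=.
  by rewrite normrZ normfV normr_id mulVf ?gt_eqF.
rewrite dualZ // normrM normfV normr_id -ler_pdivlMl ?invr_gt0 // invrK.
by rewrite mulrC.
Qed.

Lemma dnormN h : dnorm (fun z => - h z) = dnorm h.
Proof.
rewrite /dnorm; congr sup; apply/seteqP; split=> _ [x x1 <-];
  by exists x; rewrite ?normrN.
Qed.

End DualSpace.

Section ResolventEstimates.
Context {R : realType} {X : completeNormedModType R}.
Context {e : R} {x z : X} {f g w : X -> R}.
Hypotheses (Jw : J_eps e (z - x) w) (fE : f = (fun u => g u + w u)).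

Lemma J_eps_dnorm_sqr : dnorm w ^+ 2 <= 4 * (`|z - x| ^+ 2 + e).
Proof.
case: Jw => wd J.
have /ler_normlP [_ wle] := dual_le_dnorm (z - x) wd.
have := dnorm_ge0 wd; have : 0 <= (dnorm w - 2 * `|z - x|) ^+ 2 by rewrite sqr_ge0.
by rewrite !expr2 in J *; nra.
Qed.

Lemma dnorm_sub_solution : dnorm (fun u => g u - f u) = dnorm w.
Proof. by rewrite -dnormN fE; congr dnorm; apply/funext => u; ring. Qed.

Lemma J_eps_monotone_dist_sqr {y h} : is_dual f -> is_dual h ->
  0 <= g (z - y) - h (z - y) ->
  `|z - x| ^+ 2 <= 4 * ((dnorm (fun u => h u - f u) + `|y - x|) ^+ 2 + e).
Proof.
move=> fd hd mono; case: (Jw) => wd J.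
have tri : `|z - y| <= `|z - x| + `|y - x|.
  by rewrite -[z - y](subrKA x) -[x - y]opprB ler_normB.
set A := `|z - x| in J tri *; set D := dnorm _; set T := `|y - x| in tri *.
have D0 : 0 <= D by apply: dnorm_ge0; apply: is_dualB.
have DT : 0 <= D * T by rewrite mulr_ge0 ?normr_ge0.
have wzy : w (z - y) <= D * (A + T).
  have /ler_normlP [/= hf _] := dual_le_dnorm (z - y) (is_dualB hd fd).
  rewrite -/D in hf.
  have : f (z - y) = g (z - y) + w (z - y) by rewrite fE.
  have : D * `|z - y| <= D * (A + T) by rewrite ler_wpM2l.
  lra.
have wyx : w (y - x) <= dnorm w * T.
  by have /ler_normlP [] := dual_le_dnorm (y - x) wd.
have wzx : w (z - x) = w (z - y) + w (y - x) by rewrite -dualD // addrA subrK.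
have := dnorm_ge0 wd.
have : 0 <= (dnorm w - T) ^+ 2 by rewrite sqr_ge0.
have : 0 <= (A - 2 * D) ^+ 2 by rewrite sqr_ge0.
by rewrite !expr2 in J *; nra.
Qed.

End ResolventEstimates.

Lemma cvg0_sqrD {R : realFieldType} {s e : nat -> R} :
  s @ \oo --> 0 -> e @ \oo --> 0 -> (fun n => s n ^+ 2 + e n) @ \oo --> 0.
Proof.
move=> s0 e0; rewrite -[0 : R](addr0 0) -{1}(mulr0 0).
exact: cvgD (cvgM s0 s0) e0.
Qed.

Lemma cvg0_sqr_le {R : realFieldType} (k : R) {a b : nat -> R} :
  (forall n, a n ^+ 2 <= k * b n) -> b @ \oo --> 0 -> a @ \oo --> 0.
Proof.
move=> ab /cvgr0Pnorm_lt b0; apply/cvgr0Pnorm_lt => r r0.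
have k1 : 0 < `|k| + 1 by rewrite ltr_wpDl.
near=> n.
have bn : `|b n| < r ^+ 2 / (`|k| + 1).
  by near: n; apply: b0; rewrite divr_gt0 ?exprn_gt0.
have kb : `|k| * `|b n| < r ^+ 2.
  by rewrite ltr_pdivlMr // in bn; have := normr_ge0 (b n); nra.
rewrite -(ltr_pXn2r (_ : 0 < 2)%N) ?nnegrE ?normr_ge0 ?(ltW r0) //.
rewrite -normrX ger0_norm ?sqr_ge0 //.
by apply: le_lt_trans kb; apply: le_trans (ab n) _; rewrite -normrM ler_norm.
Unshelve. all: by end_near.
Qed.

Theorem proposition3p2 (R : realType) (X : completeNormedModType R)
  (Ts : nat -> operator X) (eps : nat -> R) :
  (forall n, maximal_monotone (Ts n)) ->
  (forall n, type_D (Ts n)) ->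
  (forall n, 0 < eps n) ->
  eps @ \oo --> (0 : R) ->
  forall (x : X) (f : X -> R), is_dual f ->
  forall xs : nat -> X,
    (forall n, exists g w, [/\ Ts n (xs n) g, J_eps (eps n) (xs n - x) w &
                              f = (fun z => g z + w z)]) ->
    (liminf_op Ts x f <-> xs @ \oo --> x).
Proof.
move=> Tmax _ _ eps0 x f fd xs sol.
have /choice [gw solP] : forall n, exists p : (X -> R) * (X -> R),
    [/\ Ts n (xs n) p.1, J_eps (eps n) (xs n - x) p.2 &
        f = (fun z => p.1 z + p.2 z)].
  by move=> n; have [g [w ?]] := sol n; exists (g, w).
split.
- case=> ys [hs] [Tys ys_x hs_f]; rewrite -subr_cvg0 -norm_cvg0P.
  have ys_x0 : (fun n => `|ys n - x|) @ \oo --> 0 by rewrite norm_cvg0P subr_cvg0.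
  have s0 : (fun n => dnorm (fun z => hs n z - f z) + `|ys n - x|) @ \oo --> 0.
    by rewrite -[0 : R](addr0 0); apply: cvgD.
  apply: (cvg0_sqr_le 4 _ (cvg0_sqrD s0 eps0)) => n /=.
  have [Tg Jw fE] := solP n.
  apply: (J_eps_monotone_dist_sqr Jw fE fd); first exact: (Tmax n).1.1 _ _ (Tys n).
  exact: (Tmax n).1.2 _ _ _ _ Tg (Tys n).
- move=> xs_x; exists xs, (fun n => (gw n).1); split => [n|//|].
    by case: (solP n).
  have xs_x0 : (fun n => `|xs n - x|) @ \oo --> 0 by rewrite norm_cvg0P subr_cvg0.
  apply: (cvg0_sqr_le 4 _ (cvg0_sqrD xs_x0 eps0)) => n.
  have [_ Jw fE] := solP n.
  by rewrite (dnorm_sub_solution fE); apply: J_eps_dnorm_sqr Jw.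
Qed.
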